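(* Assume $\operatorname{tr}(C)>0$ and $\theta_0\neq\theta_*$. Let $N\ge1$, $\alpha=\min\Big\{\frac{\|\theta_0-\theta_*\|}{2\sqrt{\operatorname{tr}(C)}\,N^{3/2}},\frac1L\Big\}$ and $\beta\in[0,\min\{N\alpha,1/L\}]$, and run the noisy algorithm with these parameters. Then $$\mathbb{E}f(\theta_N)-f(\theta_* )\le\frac{2L\|\theta_0-\theta_*\|^2}{N^2}+\frac{4\sqrt{\operatorname{tr}(C)}\,\|\theta_0-\theta_*\|}{\sqrt N}.$$
   Context: Let $H\in\mathbb{R}^{d\times d}$ be symmetric positive definite with largest eigenvalue $L$, $q\in\mathbb{R}^d$, $f(\theta)=\frac12\langle\theta,H\theta\rangle-\langle q,\theta\rangle$, $\theta_*=H^{-1}q$. Let $(\varepsilon_n)_{n\ge2}$ be random vectors in $\mathbb{R}^d$ with $\mathbb{E}\varepsilon_n=0$, $\mathbb{E}[\varepsilon_n\varepsilon_m^\top]=0$ for $n\neq m$, and $\mathbb{E}[\varepsilon_n\varepsilon_n^\top]=C$ for all $n$. The noisy algorithm with parameters $\alpha,\beta$: given deterministic $\theta_0$, set $\theta_1=\theta_0$ and for $n\ge1$ $$\theta_{n+1}=\frac{2n}{n+1}\theta_n-\frac{n-1}{n+1}\theta_{n-1}-\frac{1}{n+1}\Big(n(\alpha+\beta)H(\theta_n-\theta_* )-(n-1)\beta H(\theta_{n-1}-\theta_* )-(n\alpha+\beta)\varepsilon_{n+1}\Big).$$ *)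

From HB Require Import structures.
From mathcomp Require Import all_boot all_order all_algebra.
Set Implicit Arguments. Unset Strict Implicit. Unset Printing Implicit Defensive.
Import Order.TTheory GRing.Theory Num.Theory.
Local Open Scope ring_scope.

Record ExpSpace (R : rcfType) (Omega : Type) := {
  Int : (Omega -> R) -> Prop;
  Ex : (Omega -> R) -> R;
  Int_const : forall c : R, Int (fun _ => c);
  Int_add : forall X Y, Int X -> Int Y -> Int (fun w => X w + Y w);
  Int_scale : forall (c : R) X, Int X -> Int (fun w => c * X w);
  Ex_const : forall c : R, Ex (fun _ => c) = c;
  Ex_add : forall X Y, Int X -> Int Y -> Ex (fun w => X w + Y w) = Ex X + Ex Y;
  Ex_scale : forall (c : R) X, Int X -> Ex (fun w => c * X w) = c * Ex X;
  Ex_pos : forall X, Int X -> (forall w, 0 <= X w) -> 0 <= Ex X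
}.

Definition dotv (R : rcfType) (d : nat) (u v : 'cV[R]_d) : R := (u^T *m v) 0 0.
Definition normv (R : rcfType) (d : nat) (v : 'cV[R]_d) : R := Num.sqrt (dotv v v).

Definition quadf (R : rcfType) (d : nat) (H : 'M[R]_d) (q theta : 'cV[R]_d) : R :=
  2^-1 * dotv theta (H *m theta) - dotv q theta.

Definition thstar (R : rcfType) (d : nat) (H : 'M[R]_d) (q : 'cV[R]_d) : 'cV[R]_d :=
  invmx H *m q.

(* One step: given n >= 1, theta_n, theta_{n-1} and eps_{n+1}, compute theta_{n+1}. *)
Definition noisy_step (R : rcfType) (d : nat) (H : 'M[R]_d) (ts : 'cV[R]_d)
  (alpha beta : R) (n : nat) (tn tn1 e : 'cV[R]_d) : 'cV[R]_d :=
  ((2 * n%:R) / (n%:R + 1)) *: tn - ((n%:R - 1) / (n%:R + 1)) *: tn1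
  - (n%:R + 1)^-1 *: (  (n%:R * (alpha + beta)) *: (H *m (tn - ts))
                      - ((n%:R - 1) * beta) *: (H *m (tn1 - ts))
                      - (n%:R * alpha + beta) *: e).

(* noisy_pair k w = (theta_k(w), theta_{k+1}(w)) *)
Fixpoint noisy_pair (R : rcfType) (d : nat) (Omega : Type) (H : 'M[R]_d)
  (q : 'cV[R]_d) (alpha beta : R) (eps : nat -> Omega -> 'cV[R]_d)
  (theta0 : 'cV[R]_d) (k : nat) (w : Omega) : 'cV[R]_d * 'cV[R]_d :=
  match k with
  | 0 => (theta0, theta0)
  | k'.+1 =>
      let p := noisy_pair H q alpha beta eps theta0 k' w in
      (p.2, noisy_step H (thstar H q) alpha beta k'.+1 p.2 p.1 (eps k'.+2 w))
  end.

Definition noisy_iter (R : rcfType) (d : nat) (Omega : Type) (H : 'M[R]_d)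
  (q : 'cV[R]_d) (alpha beta : R) (eps : nat -> Omega -> 'cV[R]_d)
  (theta0 : 'cV[R]_d) (n : nat) (w : Omega) : 'cV[R]_d :=
  (noisy_pair H q alpha beta eps theta0 n w).1.

(* Write X_k = k (theta_k - theta_star) and U_k = X_{k+1} - X_k.  The recursion
   becomes U_{k+1} = (1 - beta H) U_k - alpha H X_{k+1} + s_{k+1} eps_{k+2}
   with s_k = k alpha + beta, a heavy-ball iteration with additive noise.
   For alpha L <= 1 and beta L <= 1 the quadratic Lyapunov function
     I(U, X) = |U|^2 + alpha <X, H X> + alpha <X, H U> + alpha beta <X, H^2 U>
   does not increase along the noiseless recursion, while the noise adds a
   term linear in eps_{k+2} and the term s_{k+1}^2 |eps_{k+2}|^2.  The iterate
   theta_{k+1} is an affine function of eps_2, ..., eps_{k+1}, which are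
   uncorrelated with eps_{k+2}, so the linear term has mean zero and
   E I_{N-1} <= |theta_0 - theta_star|^2 + (N - 1) tr(C) (2 N alpha)^2.
   Finally I(U, X) >= 3/4 alpha <X + U, H (X + U)>, which at k = N - 1 is
   3/2 alpha N^2 (f(theta_N) - f(theta_star)); the choice of alpha balances the
   two resulting terms. *)
From HB Require Import structures.
From mathcomp Require Import all_boot all_order all_algebra.
From mathcomp Require Import complex spectral sesquilinear.
From mathcomp Require Import ring lra.
From Stdlib Require Import FunctionalExtensionality.
Import Order.TTheory GRing.Theory Num.Theory.
Local Open Scope ring_scope.

Set Implicit Arguments. Unset Strict Implicit. Unset Printing Implicit Defensive.

Section RayleighBound.
Variable R : rcfType.
Local Notation C := (R[i]).
Local Notation rc := (real_complex R).

Lemma real_complex_real (x : R) : (rc x : C) \is Num.real.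
Proof. by apply/complex_realP; exists x. Qed.

Lemma conj_real_complex (x : R) : Num.conj (rc x : C) = rc x.
Proof. exact: conj_Creal (real_complex_real x). Qed.

Variables (n : nat) (H : 'M[R]_n) (L : R).
Hypothesis Hsym : H^T = H.
Hypothesis HL : forall a, eigenvalue H a -> a <= L.

Let Hc : 'M[C]_n := map_mx rc H.

Lemma real_complex_hermsym : Hc \is hermsymmx.
Proof.
apply: realsym_hermsym.
  apply/is_hermitianmxP; rewrite expr0 scale1r map_mx_id // /Hc.
  by rewrite [RHS]map_trmx Hsym.
by apply/mxOverP => i j; rewrite mxE; exact: real_complex_real.
Qed.

Lemma spectral_diag_le j : spectral_diag Hc 0 j <= rc L.
Proof.
have Hherm := real_complex_hermsym.
have /orthomx_spectralP Hdec := hermitian_normalmx Hherm.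
set P := spectralmx Hc in Hdec; set D := spectral_diag Hc in Hdec *.
have Punit : P \in unitmx by exact/unitarymx_unit/spectral_unitarymx.
have PHc : P *m Hc = diag_mx D *m P.
  by rewrite {1}Hdec !mulmxA mulmxV // mul1mx.
have /complex_realP [k Dk] : D 0 j \is Num.real.
  by move/mxOverP: (hermitian_spectral_diag_real Hherm); apply.
rewrite Dk lecR; apply: HL; rewrite -(eigenvalue_map rc) -/Hc.
apply/eigenvalueP; exists (row j P).
  rewrite -row_mul PHc; apply: (@eq_trans _ _ (D 0 j *: row j P)); last by rewrite Dk.
  by rewrite mul_diag_mx; apply/rowP => l; rewrite !mxE.
apply/eqP => Pj0.
have := congr1 (fun M : 'M[C]_n => row j M) (mulmxV Punit).
rewrite /= row_mul Pj0 mul0mx => /rowP /(_ j).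
by rewrite !mxE eqxx /= => /eqP; rewrite eq_sym oner_eq0.
Qed.

(* Diagonalize H over R[i] by a unitary matrix; the bound holds termwise. *)
Lemma dotv_mulmx_le_eigenbound (y : 'cV[R]_n) : dotv y (H *m y) <= L * dotv y y.
Proof.
have /orthomx_spectralP Hdec := hermitian_normalmx real_complex_hermsym.
have Pu := spectral_unitarymx Hc.
set P := spectralmx Hc in Hdec Pu; set D := spectral_diag Hc in Hdec.
have Punit : P \in unitmx by exact: unitarymx_unit.
set yc : 'cV[C]_n := map_mx rc y.
set w := P *m yc.
set wb := map_mx Num.conj w.
have ycr : map_mx Num.conj yc = yc.
  by apply/matrixP => i j; rewrite !mxE conj_real_complex.
have ywb : yc^T *m invmx P = wb^T.
  rewrite invmx_unitary // /wb /w map_mxM trmx_mul ycr map_trmx.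
  by congr (_ *m _); apply/matrixP => i j; rewrite !mxE.
have rcE (M : 'M[R]_1) : rc (M 0 0) = (map_mx rc M) 0 0 by rewrite mxE.
rewrite -(lecR (dotv y (H *m y))) rmorphM /dotv /= !rcE !map_mxM -map_trmx.
rewrite -/yc -/Hc Hdec.
have -> : yc^T *m yc = wb^T *m w.
  by rewrite -ywb /w -mulmxA (mulmxA (invmx P)) mulVmx // mul1mx.
have -> : yc^T *m (invmx P *m diag_mx D *m P *m yc) = wb^T *m diag_mx D *m w.
  by rewrite -ywb /w !mulmxA.
rewrite mul_mx_diag !mxE mulr_sumr; apply: ler_sum => i _; rewrite !mxE.
rewrite mulrAC [rc L * _]mulrC; apply: ler_wpM2l; last exact: spectral_diag_le.
by rewrite mulrC mul_conjC_ge0.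
Qed.

End RayleighBound.

Section DotAlgebra.
Variables (R : rcfType) (d : nat).
Implicit Types a b c : 'cV[R]_d.

Lemma dotvE a b : dotv a b = \sum_i a i 0 * b i 0.
Proof. by rewrite /dotv mxE; apply: eq_bigr => i _; rewrite mxE. Qed.

Lemma dotvDl a b c : dotv (a + b) c = dotv a c + dotv b c.
Proof. by rewrite !dotvE -big_split; apply: eq_bigr => i _; rewrite mxE mulrDl. Qed.
Lemma dotvC a b : dotv a b = dotv b a.
Proof. by rewrite !dotvE; apply: eq_bigr => i _; rewrite mulrC. Qed.
Lemma dotvDr a b c : dotv a (b + c) = dotv a b + dotv a c.
Proof. by rewrite dotvC dotvDl !(dotvC a). Qed.
Lemma dotvZl (k : R) a b : dotv (k *: a) b = k * dotv a b.
Proof. by rewrite !dotvE mulr_sumr; apply: eq_bigr => i _; rewrite mxE mulrA. Qed.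
Lemma dotvZr (k : R) a b : dotv a (k *: b) = k * dotv a b.
Proof. by rewrite dotvC dotvZl dotvC. Qed.
Lemma dotvNl a b : dotv (- a) b = - dotv a b.
Proof. by rewrite -scaleN1r dotvZl mulN1r. Qed.
Lemma dotvNr a b : dotv a (- b) = - dotv a b.
Proof. by rewrite -scaleN1r dotvZr mulN1r. Qed.
Lemma dotvBl a b c : dotv (a - b) c = dotv a c - dotv b c.
Proof. by rewrite dotvDl dotvNl. Qed.
Lemma dotvBr a b c : dotv a (b - c) = dotv a b - dotv a c.
Proof. by rewrite dotvDr dotvNr. Qed.
Lemma dotv0l b : dotv 0 b = 0.
Proof. by rewrite dotvE big1 // => i _; rewrite mxE mul0r. Qed.
Lemma dotv0r b : dotv b 0 = 0.
Proof. by rewrite dotvC dotv0l. Qed.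

Lemma dotv_ge0 a : 0 <= dotv a a.
Proof. by rewrite dotvE; apply: sumr_ge0 => i _; rewrite -expr2 sqr_ge0. Qed.

Lemma dotv_gt0 a : a != 0 -> 0 < dotv a a.
Proof.
move=> a0; rewrite lt_def dotv_ge0 andbT; apply: contra a0 => /eqP.
rewrite dotvE => /eqP; rewrite psumr_eq0 => [/allP H0|i _]; last first.
  by rewrite -expr2 sqr_ge0.
apply/eqP/matrixP => i j; rewrite (ord1 j) mxE.
by have := H0 i (mem_index_enum i); rewrite /= -expr2 sqrf_eq0 => /eqP.
Qed.

Variable H : 'M[R]_d.
Hypothesis Hsym : H^T = H.

Lemma dotvHl a b : dotv (H *m a) b = dotv a (H *m b).
Proof. by rewrite /dotv trmx_mul Hsym mulmxA. Qed.
Lemma dotvHC a b : dotv a (H *m b) = dotv b (H *m a).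
Proof. by rewrite dotvC dotvHl. Qed.
Lemma dotvH2C a b : dotv a (H *m (H *m b)) = dotv b (H *m (H *m a)).
Proof. by rewrite dotvC !dotvHl. Qed.
Lemma dotvH3C a b :
  dotv a (H *m (H *m (H *m b))) = dotv b (H *m (H *m (H *m a))).
Proof. by rewrite dotvC !dotvHl. Qed.

End DotAlgebra.

Ltac dotv_expand Hsym :=
  repeat progress (rewrite ?(mulmxDr, mulmxBr, mulmxN, mulmx0) -?scalemxAr);
  rewrite ?(dotvDl, dotvDr, dotvBl, dotvBr, dotvNl, dotvNr, dotvZl, dotvZr,
            dotv0l, dotv0r);
  rewrite ?(dotvHl Hsym).

Ltac dotv_sym Hsym a b :=
  rewrite ?(dotvC a b) ?(dotvHC Hsym a b) ?(dotvH2C Hsym a b) ?(dotvH3C Hsym a b).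

Lemma quadf_sub_thstar (R : rcfType) d (H : 'M[R]_d) (q x : 'cV[R]_d) :
  H^T = H -> H *m thstar H q = q ->
  quadf H q x - quadf H q (thstar H q) =
  2^-1 * dotv (x - thstar H q) (H *m (x - thstar H q)).
Proof.
move=> Hsym; set ts := thstar H q => Hts; rewrite /quadf -Hts.
by dotv_expand Hsym; dotv_sym Hsym x ts; field.
Qed.

Lemma ler_wpM_bound (R : realFieldType) (a L x y : R) :
  0 <= a -> a * L <= 1 -> 0 <= y -> x <= L * y -> a * x <= y.
Proof.
move=> a0 aL y0 xy; apply: le_trans (ler_wpM2l a0 xy) _.
by rewrite mulrA -[leRHS]mul1r ler_wpM2r.
Qed.

Section Lyapunov.
Variables (R : rcfType) (d : nat) (H : 'M[R]_d) (L : R).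
Hypothesis Hsym : H^T = H.
Hypothesis Hpsd : forall y, 0 <= dotv y (H *m y).
Hypothesis Hbound : forall y, dotv y (H *m y) <= L * dotv y y.
Hypothesis Lpos : 0 < L.

Lemma dotv_mulmx_sqr_le y : dotv (H *m y) (H *m y) <= L * dotv y (H *m y).
Proof.
have := Hpsd (y - L^-1 *: (H *m y)); have := Hbound (H *m y).
dotv_expand Hsym.
set a := dotv y (H *m y); set b := dotv y (H *m (H *m y)).
set c := dotv y (H *m (H *m (H *m y))) => hc h.
have L0 : L != 0 by rewrite gt_eqF.
have h1 := mulr_ge0 (ltW Lpos) h.
rewrite (_ : L * _ = L * a - 2 * b + L^-1 * c) in h1; last by field.
have : L^-1 * c <= L^-1 * (L * b) by rewrite ler_pM2l ?invr_gt0.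
rewrite mulKf //; lra.
Qed.

Definition lyap (al be : R) (u X : 'cV[R]_d) :=
  dotv u u + al * dotv X (H *m X) + al * dotv X (H *m u)
  + al * be * dotv X (H *m (H *m u)).

Definition lyap_noise_coef (al be s : R) (v X : 'cV[R]_d) :=
  (2 * s) *: (v - be *: (H *m v) - al *: (H *m X)) + (s * al) *: (H *m X)
  + (s * al * be) *: (H *m (H *m X)).

Variables (al be : R).
Hypotheses (al0 : 0 <= al) (alL : al * L <= 1) (be0 : 0 <= be) (beL : be * L <= 1).

(* Here [v] plays U_k and [X] plays X_(k+1), so that [X - v] is X_k. *)
Lemma lyap_step_le (s : R) (v X xi : 'cV[R]_d) :
  lyap al be (v - be *: (H *m v) - al *: (H *m X) + s *: xi) X <=
  lyap al be v (X - v) + dotv (lyap_noise_coef al be s v X) xi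
  + s ^+ 2 * dotv xi xi.
Proof.
have hv := Hpsd v.
have T1 := mulr_ge0 be0 (Hpsd (al *: (H *m X) - 2^-1 *: (v - be *: (H *m v)))).
have T2 : 0 <= be * (dotv v (H *m v) - al * dotv (H *m v) (H *m v)).
  by rewrite mulr_ge0 // subr_ge0 (ler_wpM_bound al0 alL hv (dotv_mulmx_sqr_le v)).
have T3 : 0 <= be * (dotv v (H *m v) - be * dotv (H *m v) (H *m v)).
  by rewrite mulr_ge0 // subr_ge0 (ler_wpM_bound be0 beL hv (dotv_mulmx_sqr_le v)).
have T4 : 0 <= be ^+ 2 *
    (dotv (H *m v) (H *m v) - be * dotv (H *m v) (H *m (H *m v))).
  rewrite mulr_ge0 ?sqr_ge0 // subr_ge0.
  exact: ler_wpM_bound be0 beL (dotv_ge0 _) (Hbound _).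
move: T1 T2 T3 T4; rewrite /lyap /lyap_noise_coef; dotv_expand Hsym.
dotv_sym Hsym X v; dotv_sym Hsym xi v; dotv_sym Hsym xi X.
lra.
Qed.

Lemma lyap_ge (u X : 'cV[R]_d) :
  3 / 4 * (al * dotv (X + u) (H *m (X + u))) <= lyap al be u X.
Proof.
have T1 := mulr_ge0 al0 (Hpsd (2^-1 *: (X + u) - (u - be *: (H *m u)))).
have T2 : al * dotv u (H *m u) <= dotv u u :=
  ler_wpM_bound al0 alL (dotv_ge0 _) (Hbound u).
have T3 : 0 <= al * be *
    (dotv (H *m u) (H *m u) - be * dotv (H *m u) (H *m (H *m u))).
  by rewrite !mulr_ge0 // subr_ge0 (ler_wpM_bound be0 beL (dotv_ge0 _) (Hbound _)).
move: T1 T2 T3; rewrite /lyap; dotv_expand Hsym; dotv_sym Hsym X u.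
lra.
Qed.

End Lyapunov.

Lemma noisy_step_scaled (R : rcfType) d (H : 'M[R]_d) (al be : R) (n : nat)
    (ts tn tn1 xi : 'cV[R]_d) :
  (n%:R + 1) *: (noisy_step H ts al be n tn tn1 xi - ts) - n%:R *: (tn - ts) =
  (n%:R *: (tn - ts) - (n%:R - 1) *: (tn1 - ts))
  - be *: (H *m (n%:R *: (tn - ts) - (n%:R - 1) *: (tn1 - ts)))
  - al *: (H *m (n%:R *: (tn - ts))) + (n%:R * al + be) *: xi.
Proof.
rewrite /noisy_step.
repeat progress (rewrite ?(mulmxDr, mulmxBr, mulmxN, mulmx0) -?scalemxAr).
move: (H *m tn) (H *m tn1) (H *m ts) => a b c.
have n0 : (n%:R + 1 : R) != 0 by rewrite natr1 pnatr_eq0.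
by apply/matrixP => i j; rewrite !mxE; field.
Qed.

Section Expectation.
Variables (R : rcfType) (Omega : Type) (P : ExpSpace R Omega).

Lemma Int_ext (F G : Omega -> R) : (forall w, F w = G w) -> Int P F -> Int P G.
Proof. by move=> e; rewrite (functional_extensionality F G e). Qed.
Lemma Ex_ext (F G : Omega -> R) : (forall w, F w = G w) -> Ex P F = Ex P G.
Proof. by move=> e; rewrite (functional_extensionality F G e). Qed.

Lemma Int_opp F : Int P F -> Int P (fun w => - F w).
Proof. by move=> h; apply: Int_ext (Int_scale (-1) h) => w; rewrite mulN1r. Qed.
Lemma Ex_opp F : Int P F -> Ex P (fun w => - F w) = - Ex P F.
Proof. by move=> h; rewrite -(Ex_ext (fun w => mulN1r (F w))) Ex_scale // mulN1r. Qed.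
Lemma Int_sub F G : Int P F -> Int P G -> Int P (fun w => F w - G w).
Proof. by move=> hF hG; apply: Int_add hF (Int_opp hG). Qed.
Lemma Ex_sub F G :
  Int P F -> Int P G -> Ex P (fun w => F w - G w) = Ex P F - Ex P G.
Proof. by move=> hF hG; rewrite Ex_add ?Ex_opp //; apply: Int_opp. Qed.

Lemma Ex_le F G :
  Int P F -> Int P G -> (forall w, F w <= G w) -> Ex P F <= Ex P G.
Proof.
move=> hF hG hle; rewrite -subr_ge0 -Ex_sub //.
by apply: Ex_pos => [|w]; [exact: Int_sub | rewrite subr_ge0].
Qed.

Lemma Int_sum (I : eqType) (r : seq I) (F : I -> Omega -> R) :
  (forall i, i \in r -> Int P (F i)) -> Int P (fun w => \sum_(i <- r) F i w).
Proof.
elim: r => [|x r IH] Hr.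
  by apply: Int_ext (Int_const P 0) => w; rewrite big_nil.
apply: Int_ext (Int_add (Hr x (mem_head _ _)) (IH _)) => [w|i ir].
  by rewrite big_cons.
by apply: Hr; rewrite in_cons ir orbT.
Qed.

Lemma Ex_sum (I : eqType) (r : seq I) (F : I -> Omega -> R) :
  (forall i, i \in r -> Int P (F i)) ->
  Ex P (fun w => \sum_(i <- r) F i w) = \sum_(i <- r) Ex P (F i).
Proof.
elim: r => [|x r IH] Hr.
  by rewrite (Ex_ext (fun w => big_nil _ _ _ _)) Ex_const big_nil.
have Hr' : forall i, i \in r -> Int P (F i).
  by move=> i ir; apply: Hr; rewrite in_cons ir orbT.
rewrite (Ex_ext (fun w => big_cons _ _ _ _ _ _)) Ex_add ?IH ?big_cons //.
  exact: Hr (mem_head _ _).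
exact: Int_sum.
Qed.

Variables (d : nat) (eps : nat -> Omega -> 'cV[R]_d) (C : 'M[R]_d).
Hypothesis hI1 : forall n (i : 'I_d), (2 <= n)%N -> Int P (fun w => eps n w i 0).
Hypothesis hI2 : forall n m (i j : 'I_d), (2 <= n)%N -> (2 <= m)%N ->
  Int P (fun w => eps n w i 0 * eps m w j 0).
Hypothesis hE1 : forall n (i : 'I_d), (2 <= n)%N -> Ex P (fun w => eps n w i 0) = 0.
Hypothesis hE2 : forall n m (i j : 'I_d), (2 <= n)%N -> (2 <= m)%N -> n <> m ->
  Ex P (fun w => eps n w i 0 * eps m w j 0) = 0.
Hypothesis hC : forall n (i j : 'I_d), (2 <= n)%N ->
  Ex P (fun w => eps n w i 0 * eps n w j 0) = C i j.

(* Only uncorrelatedness of the noise is assumed, so the random variables we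
   can control are the affine functions of eps_2, ..., eps_(k-1). *)
Definition lin_noise (k : nat) (F : Omega -> R) :=
  exists (c0 : R) (a : nat -> 'I_d -> R),
  forall w, F w = c0 + \sum_(2 <= j < k) \sum_l a j l * eps j w l 0.

Definition aff_noise (k : nat) (Y : Omega -> 'cV[R]_d) :=
  exists (c : 'cV[R]_d) (M : nat -> 'M[R]_d),
  forall w, Y w = c + \sum_(2 <= j < k) M j *m eps j w.

Lemma lin_noise_Int k F : lin_noise k F -> Int P F.
Proof.
move=> [c0 [a e]]; apply: Int_ext (Int_add (Int_const P c0) (Int_sum _)) => [w|j].
  by rewrite e.
rewrite mem_index_iota => /andP[j2 _].
by apply: Int_sum => l _; apply: Int_scale; apply: hI1.
Qed.

Lemma Int_eps_mul_lin_noise k j l G : (2 <= j)%N -> lin_noise k G ->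
  Int P (fun w => eps j w l 0 * G w).
Proof.
move=> j2 [c0 [a e]].
apply: (@Int_ext (fun w => c0 * eps j w l 0 +
   \sum_(2 <= j' < k) \sum_l' a j' l' * (eps j w l 0 * eps j' w l' 0))).
  move=> w; rewrite e mulrDr mulr_sumr [_ * c0]mulrC; congr (_ + _).
  apply: eq_bigr => j'' _; rewrite mulr_sumr.
  by apply: eq_bigr => l' _; rewrite mulrCA.
apply: Int_add; first exact: Int_scale (hI1 l j2).
apply: Int_sum => j'; rewrite mem_index_iota => /andP[j'2 _].
by apply: Int_sum => l' _; apply: Int_scale; apply: hI2.
Qed.

Lemma Int_mul_lin_noise k k' F G : lin_noise k F -> lin_noise k' G ->
  Int P (fun w => F w * G w).
Proof.
move=> [c0 [a e]] hG.
apply: (@Int_ext (fun w => c0 * G w +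
   \sum_(2 <= j < k) \sum_l a j l * (eps j w l 0 * G w))).
  move=> w; rewrite e mulrDl mulr_suml; congr (_ + _).
  apply: eq_bigr => j'' _; rewrite mulr_suml.
  by apply: eq_bigr => l' _; rewrite mulrA.
apply: Int_add; first exact: Int_scale (lin_noise_Int hG).
apply: Int_sum => j; rewrite mem_index_iota => /andP[j2 _].
by apply: Int_sum => l _; apply: Int_scale; apply: Int_eps_mul_lin_noise hG.
Qed.

Lemma Ex_lin_noise_mul_eps m G (i : 'I_d) : (2 <= m)%N -> lin_noise m G ->
  Ex P (fun w => G w * eps m w i 0) = 0.
Proof.
move=> m2 [c0 [a e]].
rewrite (Ex_ext (G := fun w => c0 * eps m w i 0 +
    \sum_(2 <= j < m) \sum_l a j l * (eps j w l 0 * eps m w i 0))); last first.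
  move=> w; rewrite e mulrDl mulr_suml; congr (_ + _).
  apply: eq_bigr => j _; rewrite mulr_suml.
  by apply: eq_bigr => l _; rewrite mulrA.
have hsum : forall j, j \in index_iota 2 m ->
    Int P (fun w => \sum_l a j l * (eps j w l 0 * eps m w i 0)).
  move=> j; rewrite mem_index_iota => /andP[j2 _].
  by apply: Int_sum => l _; apply: Int_scale; apply: hI2.
rewrite Ex_add; [|exact: Int_scale (hI1 i m2) | exact: Int_sum].
rewrite Ex_scale; last exact: hI1.
rewrite hE1 // mulr0 add0r Ex_sum //.
apply: big1_seq => j /andP[_]; rewrite mem_index_iota => /andP[j2 jm].
rewrite Ex_sum => [|l _]; last by apply: Int_scale; apply: hI2.
apply: big1 => l _; rewrite Ex_scale ?hE2 ?mulr0 //; last by apply: hI2.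
by move=> ejm; rewrite ejm ltnn in jm.
Qed.

Lemma aff_noise_lin k Y i : aff_noise k Y -> lin_noise k (fun w => Y w i 0).
Proof.
move=> [c [M e]]; exists (c i 0), (fun j l => M j i l) => w.
by rewrite e mxE summxE; congr (_ + _); apply: eq_bigr => j _; rewrite mxE.
Qed.

Lemma Int_dotv_aff_noise k k' Y Z : aff_noise k Y -> aff_noise k' Z ->
  Int P (fun w => dotv (Y w) (Z w)).
Proof.
move=> hY hZ; apply: (@Int_ext (fun w => \sum_i Y w i 0 * Z w i 0)) => [w|].
  by rewrite dotvE.
apply: Int_sum => i _.
exact: Int_mul_lin_noise (aff_noise_lin i hY) (aff_noise_lin i hZ).
Qed.

Lemma Ex_dotv_aff_noise_eps m Y : (2 <= m)%N -> aff_noise m Y ->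
  Ex P (fun w => dotv (Y w) (eps m w)) = 0.
Proof.
move=> m2 hY.
rewrite (@Ex_ext _ (fun w => \sum_i Y w i 0 * eps m w i 0)) => [|w]; last first.
  by rewrite dotvE.
rewrite Ex_sum => [|i _].
  by apply: big1 => i _; apply: Ex_lin_noise_mul_eps => //; apply: aff_noise_lin.
apply: (@Int_ext (fun w => eps m w i 0 * Y w i 0)) => [w|]; first by rewrite mulrC.
by apply: Int_eps_mul_lin_noise => //; apply: aff_noise_lin hY.
Qed.

Lemma Int_dotv_eps m : (2 <= m)%N -> Int P (fun w => dotv (eps m w) (eps m w)).
Proof.
move=> m2; apply: (@Int_ext (fun w => \sum_i eps m w i 0 * eps m w i 0)) => [w|].
  by rewrite dotvE.
by apply: Int_sum => i _; apply: hI2.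
Qed.

Lemma Ex_dotv_eps m : (2 <= m)%N -> Ex P (fun w => dotv (eps m w) (eps m w)) = \tr C.
Proof.
move=> m2.
rewrite (@Ex_ext _ (fun w => \sum_i eps m w i 0 * eps m w i 0)) => [|w]; last first.
  by rewrite dotvE.
by rewrite Ex_sum => [|i _]; [apply: eq_bigr => i _; rewrite hC | apply: hI2].
Qed.

Lemma aff_noise_ext k Y Z : (forall w, Y w = Z w) -> aff_noise k Y -> aff_noise k Z.
Proof. by move=> e [c [M h]]; exists c, M => w; rewrite -e h. Qed.

Lemma aff_noise_const k c : aff_noise k (fun _ => c).
Proof.
by exists c, (fun _ => 0) => w; rewrite big1 ?addr0 // => j _; exact: mul0mx.
Qed.

Lemma aff_noiseD k Y Z :
  aff_noise k Y -> aff_noise k Z -> aff_noise k (fun w => Y w + Z w).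
Proof.
move=> [c [M e]] [c' [M' e']]; exists (c + c'), (fun j => M j + M' j) => w.
rewrite e e' addrACA; congr (_ + _); rewrite -big_split.
by apply: eq_bigr => j _; rewrite mulmxDl.
Qed.

Lemma aff_noiseZ k (a : R) Y : aff_noise k Y -> aff_noise k (fun w => a *: Y w).
Proof.
move=> [c [M e]]; exists (a *: c), (fun j => a *: M j) => w.
rewrite e scalerDr scaler_sumr; congr (_ + _).
by apply: eq_bigr => j _; rewrite scalemxAl.
Qed.

Lemma aff_noiseM k (A : 'M[R]_d) Y : aff_noise k Y -> aff_noise k (fun w => A *m Y w).
Proof.
move=> [c [M e]]; exists (A *m c), (fun j => A *m M j) => w.
rewrite e mulmxDr mulmx_sumr; congr (_ + _).
by apply: eq_bigr => j _; rewrite mulmxA.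
Qed.

Lemma aff_noiseB k Y Z :
  aff_noise k Y -> aff_noise k Z -> aff_noise k (fun w => Y w - Z w).
Proof.
move=> hY hZ; apply: aff_noiseD hY _.
by apply: aff_noise_ext (aff_noiseZ (-1) hZ) => w; rewrite scaleN1r.
Qed.

Lemma aff_noise_mono k k' Y : (k <= k')%N -> aff_noise k Y -> aff_noise k' Y.
Proof.
move=> kk [c [M e]]; exists c, (fun j => if (j < k)%N then M j else 0) => w.
rewrite e (big_nat_widen _ _ _ _ _ kk) big_mkcond /=; congr (_ + _).
by apply: eq_bigr => j _; case: ifP => // _; rewrite mul0mx.
Qed.

Lemma aff_noise_eps m : (2 <= m)%N -> aff_noise m.+1 (eps m).
Proof.
move=> m2; exists 0, (fun j => if j == m then 1%:M else 0) => w.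
rewrite add0r big_nat_recr //= eqxx mul1mx big1_seq ?add0r // => j /andP[_].
by rewrite mem_index_iota => /andP[_ jm]; rewrite (ltn_eqF jm) mul0mx.
Qed.

End Expectation.

Ltac aff_noise_closure :=
  repeat first [ apply: aff_noiseB | apply: aff_noiseD | apply: aff_noiseZ
               | apply: aff_noiseM | apply: aff_noise_const ].

Section NoisyIteration.
Variables (R : rcfType) (d : nat) (H : 'M[R]_d) (L : R) (q : 'cV[R]_d).
Variables (Omega : Type) (P : ExpSpace R Omega).
Variables (eps : nat -> Omega -> 'cV[R]_d) (C : 'M[R]_d).
Variables (theta0 : 'cV[R]_d) (alpha beta : R).
Hypothesis Hsym : H^T = H.
Hypothesis Hpsd : forall y, 0 <= dotv y (H *m y).
Hypothesis Hbound : forall y, dotv y (H *m y) <= L * dotv y y.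
Hypothesis Lpos : 0 < L.
Hypothesis Hts : H *m thstar H q = q.
Hypothesis hI1 : forall n (i : 'I_d), (2 <= n)%N -> Int P (fun w => eps n w i 0).
Hypothesis hI2 : forall n m (i j : 'I_d), (2 <= n)%N -> (2 <= m)%N ->
  Int P (fun w => eps n w i 0 * eps m w j 0).
Hypothesis hE1 : forall n (i : 'I_d), (2 <= n)%N -> Ex P (fun w => eps n w i 0) = 0.
Hypothesis hE2 : forall n m (i j : 'I_d), (2 <= n)%N -> (2 <= m)%N -> n <> m ->
  Ex P (fun w => eps n w i 0 * eps m w j 0) = 0.
Hypothesis hC : forall n (i j : 'I_d), (2 <= n)%N ->
  Ex P (fun w => eps n w i 0 * eps n w j 0) = C i j.
Hypotheses (al0 : 0 < alpha) (alL : alpha * L <= 1).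
Hypotheses (be0 : 0 <= beta) (beL : beta * L <= 1).

Local Notation ts := (thstar H q).
Local Notation th := (noisy_iter H q alpha beta eps theta0).

Definition scaled_err k w := k%:R *: (th k w - ts).
Definition scaled_incr k w := scaled_err k.+1 w - scaled_err k w.
Definition lyap_iter k w := lyap H alpha beta (scaled_incr k w) (scaled_err k w).
Definition noise_weight k := k%:R * alpha + beta.

Lemma aff_noise_iter k : aff_noise eps k.+1 (th k).
Proof.
suff : aff_noise eps k.+1 (th k) /\ aff_noise eps k.+2 (th k.+1) by case.
elim: k => [|k [IH1 IH2]].
  by split; apply: aff_noise_ext (aff_noise_const eps _ theta0).
split => //; rewrite /noisy_iter /= /noisy_step -/(th k.+1) -/(th k).
by aff_noise_closure; first [ exact: aff_noise_mono (leqnSn _) IH2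
  | exact: aff_noise_mono (leqW (leqnSn _)) IH1 | exact: aff_noise_eps ].
Qed.

Lemma aff_noise_scaled_err k : aff_noise eps k.+1 (scaled_err k).
Proof. by aff_noise_closure; exact: aff_noise_iter. Qed.

Lemma aff_noise_scaled_incr k : aff_noise eps k.+2 (scaled_incr k).
Proof.
apply: aff_noiseB; first exact: aff_noise_scaled_err.
exact: aff_noise_mono (leqnSn _) (aff_noise_scaled_err k).
Qed.

Lemma scaled_incr_rec m w : scaled_incr m.+1 w = scaled_incr m w
  - beta *: (H *m scaled_incr m w) - alpha *: (H *m scaled_err m.+1 w)
  + noise_weight m.+1 *: eps m.+2 w.
Proof.
have e2 : ((m.+2)%:R : R) = (m.+1)%:R + 1 by rewrite natr1.
have e0 : ((m)%:R : R) = (m.+1)%:R - 1 by rewrite -natr1 addrK.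
by rewrite /scaled_incr /scaled_err e2 e0; exact: noisy_step_scaled.
Qed.

Lemma lyap_iter_succ_le m w : lyap_iter m.+1 w <= lyap_iter m w
  + dotv (lyap_noise_coef H alpha beta (noise_weight m.+1) (scaled_incr m w)
            (scaled_err m.+1 w)) (eps m.+2 w)
  + noise_weight m.+1 ^+ 2 * dotv (eps m.+2 w) (eps m.+2 w).
Proof.
rewrite /lyap_iter scaled_incr_rec.
have -> : scaled_err m w = scaled_err m.+1 w - scaled_incr m w.
  by rewrite /scaled_incr opprB addrC subrK.
exact: lyap_step_le (ltW al0) alL be0 beL _ _ _ _.
Qed.

Lemma Int_lyap_iter k : Int P (lyap_iter k).
Proof.
have hU := aff_noise_scaled_incr k.
have hX := aff_noise_mono (leqnSn _) (aff_noise_scaled_err k).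
rewrite /lyap_iter /lyap.
apply: Int_add; first apply: Int_add; first apply: Int_add; try apply: Int_scale.
- exact (Int_dotv_aff_noise hI1 hI2 hU hU).
- exact (Int_dotv_aff_noise hI1 hI2 hX (aff_noiseM H hX)).
- exact (Int_dotv_aff_noise hI1 hI2 hX (aff_noiseM H hU)).
- exact (Int_dotv_aff_noise hI1 hI2 hX (aff_noiseM H (aff_noiseM H hU))).
Qed.

Lemma Ex_lyap_iter_succ_le m :
  Ex P (lyap_iter m.+1) <= Ex P (lyap_iter m) + noise_weight m.+1 ^+ 2 * \tr C.
Proof.
have m2 : (2 <= m.+2)%N by [].
have hZ : aff_noise eps m.+2 (fun w => lyap_noise_coef H alpha beta
    (noise_weight m.+1) (scaled_incr m w) (scaled_err m.+1 w)).
  by rewrite /lyap_noise_coef; aff_noise_closure; first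
    [exact (aff_noise_iter _) | exact (aff_noise_mono (leqnSn _) (aff_noise_iter _))].
have hIm := Int_lyap_iter m.
have hdot := Int_dotv_aff_noise hI1 hI2 hZ (aff_noise_eps eps m2).
have hnorm := Int_scale (noise_weight m.+1 ^+ 2) (Int_dotv_eps hI2 m2).
apply: le_trans (Ex_le (Int_lyap_iter m.+1) (Int_add (Int_add hIm hdot) hnorm)
  (lyap_iter_succ_le m)) _.
rewrite (Ex_add (Int_add hIm hdot) hnorm) (Ex_add hIm hdot).
rewrite (Ex_scale _ (Int_dotv_eps hI2 m2)).
by rewrite (Ex_dotv_aff_noise_eps hI1 hI2 hE1 hE2 m2 hZ) (Ex_dotv_eps hI2 hC m2) addr0.
Qed.

Lemma Ex_lyap_iter_le N m : beta <= N%:R * alpha -> (m < N)%N ->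
  Ex P (lyap_iter m) <=
  dotv (theta0 - ts) (theta0 - ts) + m%:R * (\tr C * (2 * N%:R * alpha) ^+ 2).
Proof.
move=> beN; elim: m => [|m IH] hm.
  rewrite mul0r addr0 (@Ex_ext _ _ _ _ (fun _ => dotv (theta0 - ts) (theta0 - ts))).
    by rewrite Ex_const.
  move=> w; rewrite /lyap_iter /scaled_incr /scaled_err /lyap /= scale0r scale1r.
  by rewrite subr0 !dotv0l !mulr0 !addr0.
have trC0 : 0 <= \tr C.
  rewrite -(Ex_dotv_eps hI2 hC (leqnn 2)); apply: Ex_pos => [|w].
    exact: Int_dotv_eps.
  exact: dotv_ge0.
have s0 : 0 <= noise_weight m.+1 by rewrite addr_ge0 // mulr_ge0 // ltW.
have s1 : noise_weight m.+1 <= 2 * N%:R * alpha.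
  have : m.+1%:R * alpha <= N%:R * alpha.
    by apply: (ler_wpM2r (ltW al0)); rewrite ler_nat ltnW.
  rewrite /noise_weight; lra.
have sC : noise_weight m.+1 ^+ 2 * \tr C <= \tr C * (2 * N%:R * alpha) ^+ 2.
  by rewrite mulrC ler_wpM2l // !expr2 ler_pM.
have := IH (ltnW hm); have := Ex_lyap_iter_succ_le m.
rewrite -natr1 mulrDl mul1r; lra.
Qed.

Lemma gap_le_lyap_iter N w : (0 < N)%N ->
  quadf H q (th N w) - quadf H q ts <=
  2 / (3 * alpha * N%:R ^+ 2) * lyap_iter N.-1 w.
Proof.
move=> N0; have NM : N.-1.+1 = N := prednK N0.
have := lyap_ge Hsym Hpsd Hbound (ltW al0) alL be0 beL
  (scaled_incr N.-1 w) (scaled_err N.-1 w).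
rewrite {1}/scaled_incr addrC subrK NM /scaled_err quadf_sub_thstar //.
move: (th N w - ts) => z; rewrite -scalemxAr dotvZl dotvZr => lo.
have aln0 : alpha != 0 by rewrite gt_eqF.
have Nn0 : (N%:R : R) != 0 by rewrite pnatr_eq0 -lt0n.
have -> : 2^-1 * dotv z (H *m z) = 2 / (3 * alpha * N%:R ^+ 2)
    * (3 / 4 * (alpha * (N%:R * (N%:R * dotv z (H *m z))))).
  by field; rewrite aln0 Nn0.
by apply: ler_wpM2l lo; rewrite divr_ge0 // !mulr_ge0 ?sqr_ge0 // ltW.
Qed.

Lemma Int_quadf_iter N : Int P (fun w => quadf H q (th N w)).
Proof.
have hA := aff_noise_iter N.
apply: Int_sub; first apply: Int_scale.
  exact (Int_dotv_aff_noise hI1 hI2 hA (aff_noiseM H hA)).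
exact (Int_dotv_aff_noise hI1 hI2 (aff_noise_const eps N.+1 q) hA).
Qed.

Theorem Ex_quadf_gap_le N : (1 <= N)%N -> beta <= N%:R * alpha ->
  Ex P (fun w => quadf H q (th N w)) - quadf H q ts <=
  2 / (3 * alpha * N%:R ^+ 2) * (dotv (theta0 - ts) (theta0 - ts)
    + (N%:R - 1) * (\tr C * (2 * N%:R * alpha) ^+ 2)).
Proof.
move=> N1 beN; have NM : N.-1.+1 = N := prednK N1.
have hQ := Int_quadf_iter N; have hI := Int_lyap_iter N.-1.
rewrite -[X in _ - X <= _](Ex_const P) -Ex_sub //; last exact: Int_const.
apply: le_trans (Ex_le (Int_sub hQ (Int_const _ _)) (Int_scale _ hI)
  (fun w => gap_le_lyap_iter w N1)) _.
rewrite Ex_scale //.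
apply: ler_wpM2l; first by rewrite divr_ge0 // !mulr_ge0 ?sqr_ge0 // ltW.
have -> : (N%:R - 1 : R) = N.-1%:R by rewrite -{1}NM -natr1 addrK.
by apply: Ex_lyap_iter_le; rewrite // NM.
Qed.

End NoisyIteration.

Section PositiveDefinite.
Variables (R : rcfType) (d : nat) (H : 'M[R]_d).
Hypothesis Hsym : H^T = H.
Hypothesis Hpd : forall u : 'cV[R]_d, u != 0 -> 0 < dotv u (H *m u).

Lemma posdef_psd y : 0 <= dotv y (H *m y).
Proof.
case: (eqVneq y 0) => [->|y0]; first by rewrite mulmx0 dotv0r.
exact: ltW (Hpd y0).
Qed.

Lemma posdef_unitmx : H \in unitmx.
Proof.
rewrite unitmxE unitfE; apply/negP => /det0P [v v0 vH].
have vT0 : v^T != 0 by rewrite trmx_eq0.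
by have := Hpd vT0; rewrite -{1}Hsym -trmx_mul vH trmx0 dotv0r ltxx.
Qed.

Lemma posdef_eigenvalue_gt0 a : eigenvalue H a -> 0 < a.
Proof.
case/eigenvalueP => v vH v0.
have vT0 : v^T != 0 by rewrite trmx_eq0.
have := Hpd vT0; rewrite -{1}Hsym -trmx_mul vH linearZ dotvZr.
by rewrite pmulr_lgt0 // dotv_gt0.
Qed.

End PositiveDefinite.

(* With alpha = min(A, 1/L) one has 1/alpha <= L + 1/A and alpha <= A; here
   t stands for sqrt N. *)
Lemma min_stepsize_rate_le (R : rcfType) (r S t L alpha : R) :
  0 < r -> 0 < S -> 0 < t -> 1 <= t ^+ 2 -> 0 < L ->
  alpha = Num.min (r / (2 * S * (t ^+ 2 * t))) L^-1 ->
  2 / (3 * alpha * (t ^+ 2) ^+ 2)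
    * (r ^+ 2 + (t ^+ 2 - 1) * (S ^+ 2 * (2 * t ^+ 2 * alpha) ^+ 2))
  <= 2 * L * r ^+ 2 / (t ^+ 2) ^+ 2 + 4 * S * r / t.
Proof.
move=> r0 S0 t0 t1 L0; set A := r / _ => ->.
have A0 : 0 < A by rewrite /A divr_gt0 // !mulr_gt0 // exprn_gt0.
set al := Num.min A L^-1.
have al0 : 0 < al by rewrite lt_min A0 invr_gt0.
have alA : al <= A by rewrite ge_min lexx.
have ia : al^-1 <= L + A^-1.
  have iA : 0 < A^-1 by rewrite invr_gt0.
  by rewrite /al; case: (leP A L^-1) => h; [|rewrite invrK]; lra.
have [tn0 rn0 Sn0 aln0] : [/\ t != 0, r != 0, S != 0 & al != 0].
  by rewrite !gt_eqF.
have -> : 2 / (3 * al * (t ^+ 2) ^+ 2)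
    * (r ^+ 2 + (t ^+ 2 - 1) * (S ^+ 2 * (2 * t ^+ 2 * al) ^+ 2))
   = 2 * r ^+ 2 / (3 * (t ^+ 2) ^+ 2) * al^-1
     + 8 / 3 * (t ^+ 2 - 1) * S ^+ 2 * al.
  by field; rewrite aln0 tn0.
have h1 : 2 * r ^+ 2 / (3 * (t ^+ 2) ^+ 2) * al^-1 <=
    2 / 3 * (L * r ^+ 2 / (t ^+ 2) ^+ 2) + 4 / 3 * (S * r / t).
  have -> : 2 / 3 * (L * r ^+ 2 / (t ^+ 2) ^+ 2) + 4 / 3 * (S * r / t)
      = 2 * r ^+ 2 / (3 * (t ^+ 2) ^+ 2) * (L + A^-1).
    by rewrite /A; field; rewrite rn0 tn0 Sn0.
  apply: ler_wpM2l ia.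
  by apply: divr_ge0; apply: mulr_ge0; rewrite ?sqr_ge0 ?ler0n.
have h2 : 8 / 3 * (t ^+ 2 - 1) * S ^+ 2 * al <=
    4 / 3 * (S * r / t) - 4 / 3 * (S * r / (t ^+ 2 * t)).
  have -> : 4 / 3 * (S * r / t) - 4 / 3 * (S * r / (t ^+ 2 * t))
      = 8 / 3 * (t ^+ 2 - 1) * S ^+ 2 * A.
    by rewrite /A; field; rewrite tn0 Sn0.
  apply: ler_wpM2l alA.
  by rewrite mulr_ge0 ?sqr_ge0 // mulr_ge0 ?subr_ge0 //; lra.
have p1 : 0 <= L * r ^+ 2 / (t ^+ 2) ^+ 2.
  by rewrite !mulr_ge0 ?sqr_ge0 ?invr_ge0 ?exprn_ge0 ?sqr_ge0 // ltW.
have p2 : 0 <= S * r / (t ^+ 2 * t).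
  by rewrite !mulr_ge0 ?sqr_ge0 ?invr_ge0 ?mulr_ge0 ?sqr_ge0 // ltW.
have p3 : 0 <= S * r / t by rewrite !mulr_ge0 ?invr_ge0 // ltW.
rewrite -!(mulrA 2) -!(mulrA 4) in h1 h2 *; lra.
Qed.

Unset Implicit Arguments.

Theorem corollary2 (R : rcfType) (d : nat) (H : 'M[R]_d) (L : R) (q : 'cV[R]_d)
  (Omega : Type) (P : ExpSpace R Omega) (eps : nat -> Omega -> 'cV[R]_d)
  (C : 'M[R]_d) (theta0 : 'cV[R]_d) (N : nat) (beta : R) :
  H^T = H ->
  (forall u : 'cV[R]_d, u != 0 -> 0 < dotv u (H *m u)) ->
  eigenvalue H L ->
  (forall a : R, eigenvalue H a -> a <= L) ->
  (forall n (i : 'I_d), (2 <= n)%N -> Int P (fun w => eps n w i 0)) ->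
  (forall n m (i j : 'I_d), (2 <= n)%N -> (2 <= m)%N ->
     Int P (fun w => eps n w i 0 * eps m w j 0)) ->
  (forall n (i : 'I_d), (2 <= n)%N -> Ex P (fun w => eps n w i 0) = 0) ->
  (forall n m (i j : 'I_d), (2 <= n)%N -> (2 <= m)%N -> n <> m ->
     Ex P (fun w => eps n w i 0 * eps m w j 0) = 0) ->
  (forall n (i j : 'I_d), (2 <= n)%N ->
     Ex P (fun w => eps n w i 0 * eps n w j 0) = C i j) ->
  0 < \tr C ->
  theta0 != thstar H q ->
  (1 <= N)%N ->
  let alpha := Num.min
      (normv (theta0 - thstar H q) /
         (2 * Num.sqrt (\tr C) * (N%:R * Num.sqrt N%:R))) L^-1 in
  0 <= beta -> beta <= Num.min (N%:R * alpha) L^-1 ->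
  Ex P (fun w => quadf H q (noisy_iter H q alpha beta eps theta0 N w))
    - quadf H q (thstar H q)
  <= 2 * L * normv (theta0 - thstar H q) ^+ 2 / N%:R ^+ 2
     + 4 * Num.sqrt (\tr C) * normv (theta0 - thstar H q) / Num.sqrt N%:R.
Proof.
move=> Hsym Hpd HLe HLmax hI1 hI2 hE1 hE2 hC trC0 th0 N1 alpha be0.
rewrite le_min => /andP[beN beLi].
have Lpos := posdef_eigenvalue_gt0 Hsym Hpd HLe.
have Hts : H *m thstar H q = q by rewrite /thstar mulKVmx // posdef_unitmx.
set r := normv (theta0 - thstar H q).
have r2 : r ^+ 2 = dotv (theta0 - thstar H q) (theta0 - thstar H q).
  by rewrite sqr_sqrtr // dotv_ge0.
have r0 : 0 < r by rewrite sqrtr_gt0 dotv_gt0 // subr_eq0.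
set S := Num.sqrt (\tr C).
have S0 : 0 < S by rewrite sqrtr_gt0.
set t := Num.sqrt N%:R.
have t0 : 0 < t by rewrite sqrtr_gt0 ltr0n.
have t2 : t ^+ 2 = N%:R by rewrite sqr_sqrtr // ler0n.
have alE : alpha = Num.min (r / (2 * S * (t ^+ 2 * t))) L^-1 by rewrite t2.
have al0 : 0 < alpha.
  by rewrite alE lt_min invr_gt0 Lpos andbT divr_gt0 // !mulr_gt0 // exprn_gt0.
have alL : alpha * L <= 1.
  rewrite -(mulVf (lt0r_neq0 Lpos)); apply: (ler_wpM2r (ltW Lpos)).
  by rewrite alE ge_min lexx orbT.
have beL : beta * L <= 1.
  by rewrite -(mulVf (lt0r_neq0 Lpos)); apply: (ler_wpM2r (ltW Lpos)).
apply: le_trans (Ex_quadf_gap_le theta0 Hsym (posdef_psd Hpd)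
  (dotv_mulmx_le_eigenbound Hsym HLmax) Lpos Hts hI1 hI2 hE1 hE2 hC al0 alL be0
  beL N1 beN) _.
rewrite -r2 -(sqr_sqrtr (ltW trC0)) -/S -t2.
by apply: min_stepsize_rate_le alE; rewrite // t2 ler1n.
Qed.
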